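(* Let $n\ge 3$. The wheel $W_n$ is H--cordial if and only if $n$ is odd.
   Context: The wheel $W_n$ has vertex set $\{v_0,v_1,\dots,v_n\}$ and edges $v_0v_i$ for $1\le i\le n$ together with the cycle edges $v_iv_{i+1}$ for $1\le i\le n$ (indices with $v_{n+1}=v_1$); so $v_0$ has degree $n$. A labeling of a graph $G$ is a map $f:E(G)\to\{-1,+1\}$; for each vertex $v$ set $f(v)=\sum_{e\in I(v)} f(e)$, where $I(v)$ is the set of edges incident to $v$. For an integer $c$, $e_f(c)$ is the number of edges with label $c$ and $v_f(c)$ the number of vertices $v$ with $f(v)=c$. A labeling $f$ is H--cordial if there is a positive constant $K$ such that $|f(v)|=K$ for every vertex $v$, $|e_f(1)-e_f(-1)|\le 1$, and $|v_f(K)-v_f(-K)|\le 1$. A graph is H--cordial if it admits an H--cordial labeling. *)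

From mathcomp Require Import all_boot all_order all_algebra.
Set Implicit Arguments. Unset Strict Implicit. Unset Printing Implicit Defensive.
Import Order.TTheory GRing.Theory Num.Theory.
Local Open Scope ring_scope.

(* A simple graph on a finite vertex type V is given by an adjacency relation
   (assumed symmetric and irreflexive); its edges are the 2-element sets {x,y}
   with adj x y. *)
Definition edges (V : finType) (adj : rel V) : {set {set V}} :=
  [set [set x; y] | x in V, y in V & adj x y].

(* A labeling assigns -1 or +1 to each edge (values off the edge set are irrelevant). *)
Definition is_labeling (V : finType) (adj : rel V) (f : {set V} -> int) : Prop :=
  forall e, e \in edges adj -> (f e == 1) || (f e == -1).

Definition vlab (V : finType) (adj : rel V) (f : {set V} -> int) (v : V) : int :=
  \sum_(e in edges adj | v \in e) f e.

Definition e_count (V : finType) (adj : rel V) (f : {set V} -> int) (c : int) : nat :=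
  #|[set e in edges adj | f e == c]|.
Definition v_count (V : finType) (adj : rel V) (f : {set V} -> int) (c : int) : nat :=
  #|[set v : V | vlab adj f v == c]|.

Definition H_cordial_labeling (V : finType) (adj : rel V) (f : {set V} -> int) : Prop :=
  is_labeling adj f /\
  exists K : int, 0 < K /\
    (forall v, `|vlab adj f v| = K) /\
    `|(e_count adj f 1)%:Z - (e_count adj f (-1))%:Z| <= 1 /\
    `|(v_count adj f K)%:Z - (v_count adj f (- K))%:Z| <= 1.

Definition H_cordial (V : finType) (adj : rel V) : Prop :=
  exists f, H_cordial_labeling adj f.

(* The wheel W_n on vertices 'I_(n+1): vertex 0 is the hub v_0, vertex i (1<=i<=n)
   is v_i.  Edges: v_0 v_i, and v_i v_(i+1) with v_(n+1) = v_1, i.e. i -- (i %% n).+1. *)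
Definition wheel_adj (n : nat) : rel 'I_n.+1 :=
  fun i j => [&& i != j &
     [|| (i == 0 :> nat), (j == 0 :> nat),
         (j == (i %% n).+1 :> nat) | (i == (j %% n).+1 :> nat)]].
Arguments wheel_adj n : clear implicits.

From mathcomp Require Import all_boot all_order all_algebra zify.
Set Implicit Arguments. Unset Strict Implicit. Unset Printing Implicit Defensive.
Import Order.TTheory GRing.Theory Num.Theory.
Local Open Scope ring_scope.

(* A vertex label is a sum of deg v terms equal to 1 or -1, so it has the
   parity of deg v.  In an H-cordial labeling of W_n the hub (degree n) and a
   rim vertex (degree 3) have labels of the same absolute value K, hence n is
   odd.  Conversely, for n = 2m + 1 label the spokes to v_1, ..., v_m by 1 and
   the other spokes by -1, the rim edges of the path v_1 ... v_(m+1) by -1 and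
   the other rim edges by 1.  Then v_1, v_(m+2), ..., v_(2m+1) get label 1 and
   the m + 1 other vertices get label -1.  The vertex labels sum to 0, and this
   sum counts every edge label twice, so the edge labels are balanced too. *)

Lemma sum_signs (T : finType) (P : pred T) (g : T -> int) :
  (forall x, P x -> (g x == 1) || (g x == -1)) ->
  \sum_(x | P x) g x =
    #|[set x | P x & g x == 1]|%:Z - #|[set x | P x & g x == -1]|%:Z.
Proof.
move=> g_sign; rewrite (bigID (fun x => g x == 1)) /=.
have -> : \sum_(x | P x && (g x == 1)) g x = \sum_(x in [set x | P x & g x == 1]) 1.
  by apply: eq_big => [x|x /andP[_ /eqP]]; rewrite ?inE.
have -> : \sum_(x | P x && (g x != 1)) g x = \sum_(x in [set x | P x & g x == -1]) -1.
  apply: eq_big => [x|x /andP[Px]]; last by case/orP: (g_sign x Px) => /eqP ->.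
  by rewrite inE; case: (boolP (P x)) => //= Px; case/orP: (g_sign x Px) => /eqP ->.
by rewrite !sumr_const mulNrn !natz.
Qed.

Lemma sum_signs_parity (T : finType) (A : {pred T}) (g : T -> int) :
  {in A, forall x, (g x == 1) || (g x == -1)} ->
  exists c : int, \sum_(x in A) g x = #|A|%:Z - 2 * c.
Proof.
move=> g_sign; exists (\sum_(x in A) (g x != 1)%:R).
rewrite mulr_sumr -natz -sumr_const -sumrB.
by apply: eq_bigr => x /g_sign /orP[] /eqP ->.
Qed.

Lemma sum_nat_threshold (W : nmodType) (x y : W) a b c : (a <= b <= c)%N ->
  \sum_(a <= i < c) (if (i < b)%N then x else y) = x *+ (b - a) + y *+ (c - b).
Proof.
case/andP=> ab bc; rewrite (big_cat_nat ab bc) -!sumr_const_nat.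
congr (_ + _); apply: eq_big_nat => i /andP[]; first by move=> _ ->.
by move=> bi _; rewrite ltnNge bi.
Qed.

Lemma forall_in_set2 (T : finType) (a b : T) (P : pred T) :
  [forall x in [set a; b], P x] = P a && P b.
Proof.
apply/forall_inP/andP => [P_ab|[Pa Pb] x].
  by split; apply: P_ab; rewrite !inE eqxx ?orbT.
by rewrite !inE => /orP[]/eqP ->.
Qed.

Section Labelings.
Variables (V : finType) (adj : rel V).
Hypotheses (adj_sym : symmetric adj) (adj_irr : irreflexive adj).

Lemma mem_edges x y : adj x y -> [set x; y] \in edges adj.
Proof. by move=> xy; apply/imset2P; exists x y; rewrite ?inE. Qed.

Lemma edgesP e : e \in edges adj -> exists x y, adj x y /\ e = [set x; y].
Proof. by case/imset2P => x y _; rewrite inE => xy ->; exists x, y. Qed.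

Lemma edge_card e : e \in edges adj -> #|e| = 2%N.
Proof.
case/edgesP => x [y [xy ->]]; rewrite cards2.
by case: eqVneq xy => [->|]; rewrite ?adj_irr.
Qed.

Lemma incident_edges v :
  [set e in edges adj | v \in e] = [set [set v; w] | w in [set w | adj v w]].
Proof.
apply/setP => e; rewrite inE; apply/andP/imsetP => [[/edgesP[x [y [xy ->]]]]|].
  rewrite !inE => /orP[]/eqP ->; first by exists y; rewrite ?inE.
  by exists x; rewrite ?inE 1?adj_sym // setUC.
by case=> w; rewrite inE => vw ->; rewrite mem_edges // !inE eqxx.
Qed.

Lemma vlabE (f : {set V} -> int) v :
  vlab adj f v = \sum_(w | adj v w) f [set v; w].
Proof.
rewrite /vlab (eq_bigl [in [set e in edges adj | v \in e]]) => [|e]; last by rewrite inE.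
rewrite incident_edges big_imset => [|w1 w2]; first by apply: eq_bigl => w; rewrite inE.
rewrite !inE => vw1 _ eq_vw.
have : w1 \in [set v; w2] by rewrite -eq_vw !inE eqxx orbT.
by rewrite !inE => /orP[]/eqP // w1v; rewrite w1v adj_irr in vw1.
Qed.

Lemma sum_vlab (f : {set V} -> int) :
  \sum_v vlab adj f v = 2 * \sum_(e in edges adj) f e.
Proof.
rewrite /vlab; under eq_bigr do rewrite big_mkcondr.
rewrite exchange_big mulr_sumr; apply: eq_bigr => e /edge_card card_e.
by rewrite -big_mkcond sumr_const card_e mulr_natl.
Qed.

Lemma vlab_parity (f : {set V} -> int) v : is_labeling adj f ->
  exists c : int, vlab adj f v = #|adj v|%:Z - 2 * c.
Proof.
move=> f_lab; rewrite vlabE; apply: sum_signs_parity => w vw.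
exact/f_lab/mem_edges.
Qed.

Lemma balanced_H_cordial (f : {set V} -> int) : is_labeling adj f ->
  (forall v, (vlab adj f v == 1) || (vlab adj f v == -1)) ->
  \sum_v vlab adj f v = 0 -> H_cordial_labeling adj f.
Proof.
move=> f_lab vlab_sign vlab_sum0; split=> //; exists 1; split=> //; split.
  by move=> v; case/orP: (vlab_sign v) => /eqP ->.
split.
- have := sum_signs f_lab; rewrite /e_count.
  by move: vlab_sum0; rewrite sum_vlab; lia.
- have := sum_signs (P := predT) (fun v _ => vlab_sign v); rewrite /v_count /=.
  by rewrite vlab_sum0 => /esym/eqP; rewrite subr_eq0 => /eqP ->; rewrite subrr.
Qed.

End Labelings.

Section Wheel.
Variable n : nat.
Hypothesis n_gt2 : (2 < n)%N.
Local Notation adj := (wheel_adj n).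

Lemma wheel_adj_sym : symmetric adj.
Proof.
move=> i j; rewrite /wheel_adj eq_sym; congr (_ && _).
by case: (i == 0 :> nat); case: (j == 0 :> nat); rewrite //= orbC.
Qed.

Lemma wheel_adj_irr : irreflexive adj.
Proof. by move=> i; rewrite /wheel_adj eqxx. Qed.

Definition rim_succ (v : 'I_n.+1) : 'I_n.+1 :=
  inord (if v == n :> nat then 1 else v.+1).
Definition rim_pred (v : 'I_n.+1) : 'I_n.+1 :=
  inord (if v == 1 :> nat then n else v.-1).

Lemma rim_succ_val v : v != ord0 ->
  rim_succ v = (if v == n :> nat then 1 else v.+1)%N :> nat.
Proof. by move=> v_neq0; rewrite inordK //; have := ltn_ord v; case: eqP; lia. Qed.

Lemma rim_pred_val v : v != ord0 ->
  rim_pred v = (if v == 1 :> nat then n else v.-1)%N :> nat.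
Proof. by move=> v_neq0; rewrite inordK //; have := ltn_ord v; case: eqP; lia. Qed.

Lemma wheel_adj_hub w : adj ord0 w = (w != ord0).
Proof. by rewrite /wheel_adj eq_sym /= andbT. Qed.

Lemma wheel_adj_rim v w : v != ord0 ->
  adj v w = [|| w == ord0, w == rim_succ v | w == rim_pred v].
Proof.
move=> v_neq0; have v_gt0 : (0 < v)%N by rewrite lt0n.
have mod_n (x : 'I_n.+1) : (x %% n = if x == n :> nat then 0 else x)%N.
  case: eqP => [->|x_neq_n]; rewrite ?modnn // modn_small //.
  by have := ltn_ord x; lia.
have := ltn_ord v; have := ltn_ord w.
rewrite /wheel_adj -!val_eqE /= rim_succ_val // rim_pred_val // !mod_n.
by case: (eqVneq (v : nat) n); case: (eqVneq (w : nat) n);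
  case: (eqVneq (v : nat) 1) => /= *; apply/idP/idP; lia.
Qed.

Lemma rim_nbrs_uniq v : v != ord0 ->
  [/\ rim_succ v != ord0, rim_pred v != ord0 & rim_succ v != rim_pred v].
Proof.
move=> v_neq0; have v_gt0 : (0 < v)%N by rewrite lt0n.
have := ltn_ord v; rewrite -!val_eqE /= rim_succ_val // rim_pred_val //.
by case: (eqVneq (v : nat) n); case: (eqVneq (v : nat) 1) => /= *; split; lia.
Qed.

Lemma card_hub_nbrs : #|adj ord0| = n.
Proof.
rewrite (@eq_card _ _ (predC1 ord0)) ?cardC1 ?card_ord // => w.
exact: wheel_adj_hub.
Qed.

Lemma card_rim_nbrs v : v != ord0 -> #|adj v| = 3.
Proof.
move=> v_neq0; have [s_neq0 p_neq0 s_neq_p] := rim_nbrs_uniq v_neq0.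
rewrite (@eq_card _ _ [set ord0; rim_succ v; rim_pred v]) => [|w]; last first.
  by rewrite !inE -orbA; exact: wheel_adj_rim.
rewrite -setUA cardsU1 cards2 !inE.
by rewrite !(eq_sym ord0) (negbTE s_neq0) (negbTE p_neq0) s_neq_p.
Qed.

Lemma sum_hub_nbrs (F : 'I_n.+1 -> int) :
  \sum_(w | adj ord0 w) F w = \sum_(i < n) F (lift ord0 i).
Proof. by rewrite (eq_bigl _ _ wheel_adj_hub) big_mkcond big_ord_recl /= add0r. Qed.

Lemma sum_rim_nbrs (F : 'I_n.+1 -> int) v : v != ord0 ->
  \sum_(w | adj v w) F w = F ord0 + F (rim_succ v) + F (rim_pred v).
Proof.
move=> v_neq0; have [s_neq0 p_neq0 s_neq_p] := rim_nbrs_uniq v_neq0.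
rewrite (eq_bigl _ _ (fun w => wheel_adj_rim w v_neq0)) (bigD1 ord0) ?eqxx //=.
rewrite (bigD1 (rim_succ v)) ?eqxx ?orbT ?s_neq0 //=.
rewrite (bigD1 (rim_pred v)) ?eqxx ?orbT ?p_neq0 //= 1?eq_sym ?s_neq_p //.
rewrite big1 ?addr0 ?addrA // => w.
by case: (w == ord0); case: (w == rim_succ v); case: (w == rim_pred v).
Qed.

End Wheel.

Lemma wheel_H_cordial_odd n : (2 < n)%N -> H_cordial (wheel_adj n) -> odd n.
Proof.
move=> n_gt2 [f [f_lab [K [_ [vlab_K _]]]]].
have parity := vlab_parity (@wheel_adj_sym n) (@wheel_adj_irr n) _ f_lab.
have v1_neq0 : (inord 1 : 'I_n.+1) != ord0 by rewrite -val_eqE /= inordK //; lia.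
have [a hub_a] := parity ord0; have [b rim_b] := parity (inord 1).
move: (vlab_K ord0) (vlab_K (inord 1)).
by rewrite hub_a rim_b card_hub_nbrs card_rim_nbrs //; lia.
Qed.

Section OddWheel.
Variable m : nat.
Hypothesis m_gt0 : (0 < m)%N.
Local Notation n := m.*2.+1.

Definition odd_wheel_labeling (e : {set 'I_n.+1}) : int :=
  if ord0 \in e then (if [forall x in e, (x <= m)%N] then 1 else -1)
  else (if [forall x in e, (x <= m.+1)%N] then -1 else 1).

Definition odd_wheel_vlab (v : nat) : int :=
  if (v == 1)%N || (m.+1 < v)%N then 1 else -1.

Local Notation f := odd_wheel_labeling.

Lemma odd_wheel_labeling_sign e : (f e == 1) || (f e == -1).
Proof. by rewrite /odd_wheel_labeling; case: ifP; case: ifP. Qed.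

Lemma odd_wheel_labeling_spoke w : f [set ord0; w] = if (w <= m)%N then 1 else -1.
Proof. by rewrite /odd_wheel_labeling !inE eqxx /= forall_in_set2. Qed.

Lemma odd_wheel_labeling_rim v w : v != ord0 -> w != ord0 ->
  f [set v; w] = if (v <= m.+1)%N && (w <= m.+1)%N then -1 else 1.
Proof.
move=> v_neq0 w_neq0; rewrite /odd_wheel_labeling !inE !forall_in_set2.
by rewrite !(eq_sym ord0) (negbTE v_neq0) (negbTE w_neq0).
Qed.

Lemma vlab_odd_wheel v : vlab (wheel_adj n) f v = odd_wheel_vlab v.
Proof.
have n_gt2 : (2 < n)%N by lia.
rewrite (vlabE (@wheel_adj_sym n) (@wheel_adj_irr n)).
have [->|v_neq0] := eqVneq v ord0.
  rewrite sum_hub_nbrs.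
  under eq_bigr do rewrite odd_wheel_labeling_spoke lift0.
  rewrite -(big_mkord xpredT (fun i => if (i < m)%N then 1 else -1)).
  rewrite sum_nat_threshold; last lia.
  by rewrite mulNrn !natz /odd_wheel_vlab /=; lia.
have [s_neq0 p_neq0 _] := rim_nbrs_uniq n_gt2 v_neq0.
rewrite sum_rim_nbrs // [[set v; ord0]]setUC odd_wheel_labeling_spoke.
rewrite !odd_wheel_labeling_rim // rim_succ_val // rim_pred_val //.
have := ltn_ord v; have : (0 < v)%N by rewrite lt0n.
rewrite /odd_wheel_vlab; case: (eqVneq (v : nat) n); case: (eqVneq (v : nat) 1) => /= *;
  repeat case: ifP => ? /=; lia.
Qed.

Lemma sum_odd_wheel_vlab : \sum_(v < n.+1) odd_wheel_vlab v = 0.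
Proof.
rewrite -(big_mkord xpredT odd_wheel_vlab) big_ltn // big_ltn //.
rewrite (eq_big_nat _ _ (F2 := fun i => if (i < m.+2)%N then -1 else 1)) => [|i].
  rewrite sum_nat_threshold; last lia.
  by rewrite mulNrn !natz /odd_wheel_vlab /=; lia.
case/andP=> i_ge2 _; rewrite /odd_wheel_vlab (_ : (i == 1)%N = false) /=; last lia.
by rewrite ltnS; case: ltnP.
Qed.

Lemma odd_wheel_H_cordial : H_cordial (wheel_adj n).
Proof.
exists f; apply: (balanced_H_cordial (@wheel_adj_irr n)) => [e _|v|].
- exact: odd_wheel_labeling_sign.
- by rewrite vlab_odd_wheel /odd_wheel_vlab; case: ifP.
- by rewrite -[RHS]sum_odd_wheel_vlab; apply: eq_bigr => v _; exact: vlab_odd_wheel.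
Qed.

End OddWheel.

Theorem theorem4 (n : nat) : (3 <= n)%N -> (H_cordial (wheel_adj n) <-> ssrnat.odd n).
Proof.
move=> n_ge3; split; first exact: wheel_H_cordial_odd.
move=> n_odd; rewrite -[n]odd_double_half n_odd.
by apply: odd_wheel_H_cordial; lia.
Qed.
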